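(* Let $G$ be a finite GVZ-group. Then $U(G)=K(G)$. In particular, this holds if $G$ has nilpotence class $2$.
   Context: For $\chi\in\mathrm{Irr}(G)$, the center of $\chi$ is $Z(\chi)=\{g\in G : |\chi(g)|=\chi(1)\}$. $G$ is a GVZ-group if every $\chi\in\mathrm{Irr}(G)$ vanishes on $G\setminus Z(\chi)$. For a nonabelian group $G$, let $\mathcal{X}=\{\chi\in\mathrm{Irr}(G) : Z(\chi)>Z(G)\}$ (strict containment) and define $K(G)=\bigcap_{\chi\in\mathcal{X}}\ker(\chi)$; if $G$ is abelian, set $K(G)=G$. For a normal subgroup $H$ of $G$, $\mathrm{Irr}(G\mid H)$ is the set of $\chi\in\mathrm{Irr}(G)$ with $H\not\le\ker(\chi)$, and $V(G\mid H)$ is the subgroup generated by all $g\in G$ with $\chi(g)\ne0$ for some $\chi\in\mathrm{Irr}(G\mid H)$ (with $V(G\mid 1)=1$). For a normal subgroup $N$, $U(G\mid N)$ is the product of all normal subgroups $H$ of $G$ with $V(G\mid H)\le N$, and $U(G)=U(G\mid Z(G))$. *)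

From HB Require Import structures.
From mathcomp Require Import all_boot all_order all_algebra all_fingroup all_solvable all_field all_character.
Set Implicit Arguments. Unset Strict Implicit. Unset Printing Implicit Defensive.
Import GroupScope GRing.Theory Num.Theory.
Local Open Scope ring_scope.

Section Defs.
Variable gT : finGroupType.

Definition chi_center (G : {group gT}) (i : Iirr G) : {set gT} :=
  [set g in G | `|'chi_i g| == 'chi_i 1%g].

Definition GVZ (G : {group gT}) : Prop :=
  forall i : Iirr G, forall g, g \in G -> g \notin chi_center i -> 'chi_i g = 0.

Definition Kgrp (G : {group gT}) : {set gT} :=
  if abelian G then G
  else G :&: \bigcap_(i : Iirr G | 'Z(G) \proper chi_center i) cfker 'chi_i.

Definition irr_over (G : {group gT}) (H : {set gT}) (i : Iirr G) : bool :=
  ~~ (H \subset cfker 'chi_i).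

Definition Vgrp (G : {group gT}) (H : {set gT}) : {set gT} :=
  if H == 1%g then 1%g
  else <<[set g in G | [exists i : Iirr G, irr_over H i && ('chi_i g != 0)]]>>.

Definition Ugrp_rel (G : {group gT}) (N : {set gT}) : {set gT} :=
  <<\bigcup_(H : {group gT} | (H <| G) && (Vgrp G H \subset N)) (H : {set gT})>>.

Definition Ugrp (G : {group gT}) : {set gT} := Ugrp_rel G 'Z(G).

End Defs.

From mathcomp Require Import all_boot all_order all_algebra all_fingroup all_solvable all_field all_character.
Set Implicit Arguments. Unset Strict Implicit. Unset Printing Implicit Defensive.
Import GroupScope GRing.Theory Num.Theory.
Local Open Scope ring_scope.

(* The inclusion U(G) <= K(G) holds in every group: if V(G|H) <= Z(G) and
   Z(G) < Z(chi), then an element of Z(chi) outside Z(G) is a point where chi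
   does not vanish, so it would lie in V(G|H) unless H <= ker chi.
   Conversely every chi in Irr(G | K(G)) has Z(chi) = Z(G); in a GVZ-group chi
   is nonzero only on Z(chi), hence V(G | K(G)) <= Z(G) and K(G) <= U(G).
   A group of class at most 2 is GVZ: G' <= Z(G) <= Z(chi) makes G/Z(chi)
   abelian, so chi(1)^2 = |G : Z(chi)|, which forces chi to vanish off Z(chi). *)

Section GVZgroups.
Variables (gT : finGroupType) (G : {group gT}).

Lemma chi_centerE (i : Iirr G) : chi_center i = 'Z('chi_i)%CF.
Proof.
apply/setP=> x; rewrite inE; case Gx: (x \in G); first by rewrite irr_cfcenterE.
by apply/esym/negbTE; apply: contraFN Gx => /(subsetP (cfcenter_sub _)).
Qed.

Lemma center_sub_chi_center (i : Iirr G) : 'Z(G) \subset chi_center i.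
Proof. by rewrite chi_centerE -cap_cfcenter_irr (bigcap_inf i). Qed.

Lemma chi_center_neq0 (i : Iirr G) g : g \in chi_center i -> 'chi_i g != 0.
Proof. by rewrite inE => /andP[_ /eqP chi_g]; rewrite -normr_eq0 chi_g irr1_neq0. Qed.

Lemma GVZ_chi_center (i : Iirr G) g :
  GVZ G -> g \in G -> 'chi_i g != 0 -> g \in chi_center i.
Proof. by move=> gvz Gg; apply: contraR => /(gvz i g Gg)->. Qed.

Lemma mem_Vgrp (H : {set gT}) (i : Iirr G) g :
  irr_over H i -> g \in G -> 'chi_i g != 0 -> g \in Vgrp G H.
Proof.
move=> overHi Gg chi_g; rewrite /Vgrp; case: eqP => [H1 | _].
  by move: overHi; rewrite /irr_over H1 sub1G.
by apply: mem_gen; rewrite inE Gg; apply/existsP; exists i; rewrite overHi.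
Qed.

Lemma Vgrp_subG (H : {set gT}) (A : {group gT}) :
    (forall i : Iirr G, irr_over H i -> {in G, forall g, 'chi_i g != 0 -> g \in A}) ->
  Vgrp G H \subset A.
Proof.
move=> sVA; rewrite /Vgrp; case: eqP => _; first exact: sub1G.
rewrite gen_subG; apply/subsetP => g.
by rewrite inE => /andP[Gg /existsP[i /andP[overHi chi_g]]]; apply: sVA chi_g.
Qed.

Lemma normal_sub_Ugrp_rel (N : {set gT}) (H : {group gT}) :
  H <| G -> Vgrp G H \subset N -> H \subset Ugrp_rel G N.
Proof. by move=> nsHG sVN; apply: sub_gen; apply: (bigcup_sup H); rewrite nsHG. Qed.

Lemma Ugrp_rel_sub (N : {set gT}) : Ugrp_rel G N \subset G.
Proof. by rewrite gen_subG; apply/bigcupsP => H /andP[/normal_sub]. Qed.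

Lemma sub_cfker_Vgrp_center (H : {set gT}) (i : Iirr G) :
  Vgrp G H \subset 'Z(G) -> 'Z(G) \proper chi_center i -> H \subset cfker 'chi_i.
Proof.
move=> sVZ /properP[_ [g Zchi_g notZg]]; apply: contraR notZg => overHi.
have Gg : g \in G by move: Zchi_g; rewrite inE => /andP[].
exact: subsetP sVZ g (mem_Vgrp overHi Gg (chi_center_neq0 Zchi_g)).
Qed.

Lemma Ugrp_sub_Kgrp : Ugrp G \subset Kgrp G.
Proof.
rewrite /Kgrp; case: ifP => _; first exact: Ugrp_rel_sub.
rewrite gen_subG; apply/bigcupsP => H /andP[nsHG sVZ].
rewrite subsetI normal_sub //=; apply/bigcapsP => i.
exact: sub_cfker_Vgrp_center.
Qed.

Fact Kgrp_group_set : group_set (Kgrp G).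
Proof. by rewrite /Kgrp; case: ifP => _; apply: groupP. Qed.
Canonical Kgrp_group := Group Kgrp_group_set.

Lemma Kgrp_normal : Kgrp G <| G.
Proof.
rewrite /Kgrp; case: ifP => _; first exact: normal_refl.
apply: (big_ind (fun X => G :&: X <| G)); first by rewrite setIT normal_refl.
  by move=> X Y nsXG nsYG; rewrite setIIr normalI.
by move=> i _; rewrite (setIidPr (cfker_sub _)) cfker_normal.
Qed.

Lemma irr_over_Kgrp_chi_center (i : Iirr G) :
  irr_over (Kgrp G) i -> chi_center i = 'Z(G).
Proof.
rewrite /irr_over /Kgrp => overKi; apply/eqP; rewrite eq_sym eqEproper.
rewrite center_sub_chi_center /=; case: ifP overKi => [abG _ | _].
  by rewrite (center_idP abG) properE negb_and negbK chi_centerE cfcenter_sub orbT.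
by apply: contra => ltZ; exact: subset_trans (subsetIr _ _) (bigcap_inf i ltZ).
Qed.

Lemma Kgrp_sub_Ugrp : GVZ G -> Kgrp G \subset Ugrp G.
Proof.
move=> gvz; apply: normal_sub_Ugrp_rel; first exact: Kgrp_normal.
apply: Vgrp_subG => i overKi g Gg chi_g.
by move: (GVZ_chi_center gvz Gg chi_g); rewrite irr_over_Kgrp_chi_center.
Qed.

Lemma irr_on_cfcenter (i : Iirr G) :
  abelian (G / 'Z('chi_i)%CF) -> 'chi_i \in 'CF(G, 'Z('chi_i)%CF).
Proof. by move=> abGZ; rewrite -(irr1_bound i) irr1_abelian_bound. Qed.

Lemma nil_class2_GVZ : (nil_class G <= 2)%N -> GVZ G.
Proof.
rewrite nil_class2 => sG'Z i g _; rewrite chi_centerE; apply: cfun_onP.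
apply/irr_on_cfcenter/sub_der1_abelian.
by apply: subset_trans sG'Z _; have := center_sub_chi_center i; rewrite chi_centerE.
Qed.

End GVZgroups.

Theorem lemma6p14 (gT : finGroupType) (G : {group gT}) :
  (GVZ G \/ (nilpotent G /\ nil_class G = 2)) -> Ugrp G = Kgrp G.
Proof.
move=> hyp; have gvz : GVZ G.
  by case: hyp => [// | [_ class2]]; apply: nil_class2_GVZ; rewrite class2.
by apply/eqP; rewrite eqEsubset Ugrp_sub_Kgrp Kgrp_sub_Ugrp.
Qed.
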